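(* Let $V_1$ and $V_2$ be near vector spaces over the same commutative $F$, each of finite block type. Then $BT(V_1)=BT(V_2)$ if and only if $\bar F\cap\mathrm{Aut}(V_1)=\bar F\cap\mathrm{Aut}(V_2)$.
   Context: An F-group is a pair $(V,F)$ where $(V,+)$ is a group and $F$ is a set of endomorphisms of $V$ such that: the maps $0,1,-1$ lie in $F$; $F\setminus\{0\}$ is a subgroup of $\mathrm{Aut}(V,+)$ under composition; and if $\alpha x=\beta x$ with $\alpha,\beta\in F$, $x\in V$ then $\alpha=\beta$ or $x=0$. The quasi-kernel $Q(V)$ is the set of $u\in V$ such that for all $\alpha,\beta\in F$ there is $\gamma\in F$ with $\alpha u+\beta u=\gamma u$. $(V,F)$ is a near vector space if $Q(V)$ generates $(V,+)$; ''over a commutative $F$'' means $\alpha(\beta v)=\beta(\alpha v)$ for all $\alpha,\beta\in F$, $v\in V$. For $u\in Q(V)\setminus\{0\}$, $\alpha+_u\beta$ is the unique $\gamma$ with $\alpha u+\beta u=\gamma u$. Elements $u,v\in Q(V)$ are compatible if $u+\lambda v\in Q(V)$ for some $\lambda\in F\setminus\{0\}$. By André's decomposition theorem $V$ is the direct sum of maximal regular (all nonzero quasi-kernel elements pairwise compatible) near vector subspaces $B_i$, $i\in I$, each nonzero element of $Q(V)$ lying in exactly one $B_i$; these are the blocks. For commutative $F$, all nonzero $u\in Q(V)\cap B_i$ give the same operation $+_{u_i}$ and $B_i$ is a vector space over the field $(F,+_{u_i},\circ)$. The block type is $BT(V)=\{+_{u_i}: i\in I\}$, a set of binary operations on $F$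 (equality means equality of sets of operations). $V$ has finite block type if $BT(V)$ is finite, equivalently $V$ has finitely many blocks. $\bar F$ is the set of formal finite sums $\alpha_1+_\cdot\cdots+_\cdot\alpha_n$ of elements of $F$, acting on $V$ by $(\alpha_1+_\cdot\cdots+_\cdot\alpha_n)(v)=\alpha_1(v)+\cdots+\alpha_n(v)$; $\bar F\cap\mathrm{Aut}(V)$ is the set of those formal sums acting on $V$ as automorphisms of $(V,+)$. *)

From HB Require Import structures.
From mathcomp Require Import all_boot all_order all_algebra.
From Stdlib Require Lists.List.
Set Implicit Arguments. Unset Strict Implicit. Unset Printing Implicit Defensive.
Import GRing.Theory.
Local Open Scope ring_scope.

(* The scalar "F" is an abstract type with a multiplication (composition),
   distinguished elements zero, one, minus one, acting on V via [act].
   [is_Fgroup mul z o m act] says that [act] identifies F with a set of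
   endomorphisms of (V,+) forming an F-group in the sense of the paper. *)
Definition is_Fgroup (F : Type) (mul : F -> F -> F) (z o m : F)
    (V : zmodType) (act : F -> V -> V) : Prop :=
  (forall a x y, act a (x + y) = act a x + act a y) /\
  (forall a b, (forall x, act a x = act b x) -> a = b) /\
  (forall x, act z x = 0) /\ (forall x, act o x = x) /\ (forall x, act m x = - x) /\
  (forall a b x, act (mul a b) x = act a (act b x)) /\
  z <> o /\
  (forall a b, a <> z -> b <> z -> mul a b <> z) /\
  (forall a, a <> z -> exists b, b <> z /\ mul a b = o /\ mul b a = o) /\
  (forall a b x, act a x = act b x -> a = b \/ x = 0).

Definition Fcomm (F : Type) (V : zmodType) (act : F -> V -> V) : Prop :=
  forall a b v, act a (act b v) = act b (act a v).

Definition quasi_kernel (F : Type) (V : zmodType) (act : F -> V -> V) (u : V) : Prop :=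
  forall a b, exists c, act a u + act b u = act c u.

(* near vector space: Q(V) generates (V,+) (V abelian, so the generated
   subgroup consists of finite sums of elements of Q(V) and their negatives) *)
Definition near_vector_space (F : Type) (mul : F -> F -> F) (z o m : F)
    (V : zmodType) (act : F -> V -> V) : Prop :=
  is_Fgroup mul z o m act /\
  forall v : V, exists s : seq V,
    (forall x, x \in s -> quasi_kernel act x \/ quasi_kernel act (- x)) /\
    v = \sum_(x <- s) x.

(* block type: the set of operations +_u for nonzero u in Q(V), where
   a +_u b is the (unique) c with a u + b u = c u *)
Definition block_type (F : Type) (V : zmodType) (act : F -> V -> V)
    (op : F -> F -> F) : Prop :=
  exists u : V, [/\ quasi_kernel act u, u <> 0 &
    forall a b, act a u + act b u = act (op a b) u].

Definition finite_block_type (F : Type) (V : zmodType) (act : F -> V -> V) : Prop :=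
  exists s : list (F -> F -> F), forall op, block_type act op ->
    exists op', Stdlib.Lists.List.In op' s /\ forall a b, op a b = op' a b.

(* action of a formal sum a_1 +. ... +. a_n (a list of elements of F) *)
Definition fsum_act (F : Type) (V : zmodType) (act : F -> V -> V)
    (s : seq F) (v : V) : V := \sum_(a <- s) act a v.

Definition is_aut (V : zmodType) (f : V -> V) : Prop :=
  (forall x y, f (x + y) = f x + f y) /\ bijective f.

Definition Fbar_aut (F : Type) (V : zmodType) (act : F -> V -> V) (s : seq F) : Prop :=
  is_aut (fsum_act act s).

From mathcomp Require Import all_boot all_order all_algebra.
From Stdlib Require Import Classical ClassicalEpsilon FunctionalExtensionality.
From Stdlib Require Lists.List.
Set Implicit Arguments. Unset Strict Implicit. Unset Printing Implicit Defensive.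
Import GRing.Theory.
Local Open Scope ring_scope.

(* A formal sum [s] acts on each block as the scalar [fsum_val op s], computed
   in the field (F, op, mul) of that block.  Hence [s] is an automorphism iff
   none of these finitely many values is zero: if one vanishes, [s] kills a
   nonzero quasi-kernel element; otherwise interpolation over the finitely
   many fields yields a formal sum [t] whose value on each block is the inverse
   one, and [t] inverts [s] on the quasi-kernel, which generates V.
   Consequently equal block types give equal automorphism sets.  Conversely,
   if [op] is a block operation of V1 but not of V2, interpolation yields a
   formal sum whose value is zero for [op] and one for every block operation
   of V2: an automorphism of V2 that is not one of V1. *)

Section FormalSums.

Variables (F : Type) (mul : F -> F -> F) (z o m : F).

Record mul_laws : Prop := MulLaws {
  mul_comm : forall a b, mul a b = mul b a;
  mul_one : forall a, mul o a = a;
  mul_zero : forall a, mul z a = z;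
  mul_neq0 : forall a b, a <> z -> b <> z -> mul a b <> z;
  mul_inv_ex : forall a, a <> z -> exists b, mul a b = o;
  zero_neq_one : z <> o }.

Record field_add (op : F -> F -> F) : Prop := FieldAdd {
  add_comm : forall a b, op a b = op b a;
  add_assoc : forall a b c, op (op a b) c = op a (op b c);
  add_zero : forall a, op z a = a;
  add_opp : forall a, op a (mul m a) = z;
  mul_add : forall c a b, mul c (op a b) = op (mul c a) (mul c b) }.

Hypothesis M : mul_laws.

Lemma mul_zero_r a : mul a z = z.
Proof. by rewrite mul_comm ?mul_zero. Qed.

Lemma mul_one_r a : mul a o = a.
Proof. by rewrite mul_comm ?mul_one. Qed.

Lemma one_neq_zero : o <> z.
Proof. by move/esym; apply: zero_neq_one. Qed.

Definition mul_inv a := epsilon (inhabits z) (fun b => mul a b = o).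

Lemma mul_invP a : a <> z -> mul a (mul_inv a) = o.
Proof. by move=> /(mul_inv_ex M); apply: epsilon_spec. Qed.

Section FieldAdd.

Variables (op : F -> F -> F) (A : field_add op).

Lemma add_zero_r a : op a z = a.
Proof. by rewrite add_comm ?add_zero. Qed.

Lemma add_opp_eq a b : op a (mul m b) = z -> a = b.
Proof.
move=> ab; have <- : op (op a (mul m b)) b = a.
  by rewrite add_assoc // [op (mul m b) b]add_comm // add_opp // add_zero_r.
by rewrite ab add_zero.
Qed.

End FieldAdd.

Definition fsum_val (op : F -> F -> F) (s : seq F) : F := foldr op z s.

Lemma fsum_val_cons op a s : fsum_val op (a :: s) = op a (fsum_val op s).
Proof. by []. Qed.

Lemma fsum_val_cat op (A : field_add op) s t :
  fsum_val op (s ++ t) = op (fsum_val op s) (fsum_val op t).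
Proof. by elim: s => [|a s IH] /=; rewrite ?add_zero // IH add_assoc. Qed.

Lemma fsum_val_map_mul op (A : field_add op) a t :
  fsum_val op (map (mul a) t) = mul a (fsum_val op t).
Proof. by elim: t => [|b t IH] /=; rewrite ?mul_zero_r // IH mul_add. Qed.

Lemma fsum_val_allpairs op (A : field_add op) s t :
  fsum_val op [seq mul a b | a <- s, b <- t] = mul (fsum_val op s) (fsum_val op t).
Proof.
elim: s => [|a s IH] /=; first by rewrite mul_zero.
by rewrite fsum_val_cat // fsum_val_map_mul // IH !(mul_comm M _ (fsum_val op t)) mul_add.
Qed.

Lemma fsum_separate c0 (C : list (F -> F -> F)) : field_add c0 ->
  (forall c, List.In c C -> field_add c) -> ~ List.In c0 C ->
  exists E, fsum_val c0 E <> z /\ forall c, List.In c C -> fsum_val c E = z.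
Proof.
move=> A0; elim: C => [|c C IH] CA c0C.
  by exists [:: o]; split => //=; rewrite add_zero_r //; apply: one_neq_zero.
have [E [E0 EC]] := IH (fun c' h => CA c' (or_intror h)) (fun h => c0C (or_intror h)).
have Ac := CA c (or_introl erefl).
have [a [b cab]] : exists a b, c a b <> c0 a b.
  apply: NNPP => cc0; apply: c0C; left.
  apply: functional_extensionality => a; apply: functional_extensionality => b.
  by apply: NNPP => cab; apply: cc0; exists a, b.
(* [a + b - (a +_c b)] vanishes for [c] but not for [c0]. *)
exists [seq mul x y | x <- [:: a; b; mul m (c a b)], y <- E]; split.
  rewrite fsum_val_allpairs //; apply: mul_neq0 => //=.
  by rewrite !add_zero_r // -add_assoc // => /add_opp_eq -/(_ A0) /esym.
move=> c' [<-|Cc'].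
  by rewrite fsum_val_allpairs //= !add_zero_r // -add_assoc // add_opp // mul_zero.
by rewrite fsum_val_allpairs ?EC ?mul_zero_r //; apply: CA; right.
Qed.

Lemma fsum_interpolate (g : (F -> F -> F) -> F) (C : list (F -> F -> F)) :
  (forall c, List.In c C -> field_add c) ->
  exists t, forall c, List.In c C -> fsum_val c t = g c.
Proof.
elim: C => [|c0 C IH] CA; first by exists [::].
have [t tC] := IH (fun c h => CA c (or_intror h)).
have A0 := CA c0 (or_introl erefl).
have [c0C|c0C] := classic (List.In c0 C).
  by exists t => c [<-|]; apply: tC.
have [E [E0 EC]] := fsum_separate A0 (fun c h => CA c (or_intror h)) c0C.
have [e [e0 eC]] : exists e, fsum_val c0 e = o /\
    forall c, List.In c C -> fsum_val c e = z.
  have [w Ew] := mul_inv_ex M E0.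
  exists [seq mul x y | x <- E, y <- [:: w]]; split=> [|c Cc].
    by rewrite fsum_val_allpairs // fsum_val_cons add_zero_r.
  by rewrite fsum_val_allpairs ?EC ?mul_zero //; apply: CA; right.
(* The formal sum [t (1 - e) + (g c0) e]. *)
exists ([seq mul x y | x <- t, y <- o :: map (mul m) e] ++
        [seq mul x y | x <- [:: g c0], y <- e]) => c [<-|Cc].
  rewrite fsum_val_cat // !fsum_val_allpairs // !fsum_val_cons fsum_val_map_mul //.
  by rewrite e0 add_opp // mul_zero_r add_zero // add_zero_r // mul_one_r.
have Ac := CA c (or_intror Cc).
rewrite fsum_val_cat // !fsum_val_allpairs // !fsum_val_cons fsum_val_map_mul //.
by rewrite eC // mul_zero_r add_zero_r // mul_one_r tC // mul_zero_r add_zero_r.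
Qed.

End FormalSums.

Section Additive.

Variables (V : zmodType) (f : V -> V).
Hypothesis f_additive : forall x y, f (x + y) = f x + f y.

Lemma additive0 : f 0 = 0.
Proof. by apply: (addrI (f 0)); rewrite -f_additive !addr0. Qed.

Lemma additiveN x : f (- x) = - f x.
Proof. by apply: (addrI (f x)); rewrite -f_additive !subrr additive0. Qed.

Lemma additive_sum (I : Type) (r : seq I) (h : I -> V) :
  f (\sum_(i <- r) h i) = \sum_(i <- r) f (h i).
Proof.
by elim: r => [|i r IH]; rewrite ?big_nil ?additive0 // !big_cons f_additive IH.
Qed.

Lemma additive_id_of_generators (Q : V -> Prop) :
  (forall v, exists s : seq V,
     (forall x, x \in s -> Q x \/ Q (- x)) /\ v = \sum_(x <- s) x) ->
  (forall x, Q x -> x <> 0 -> f x = x) -> forall v, f v = v.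
Proof.
move=> genQ fixQ v; have [s [sQ ->]] := genQ v.
have fixQ0 x : Q x -> f x = x.
  by have [->|/eqP nx Qx] := eqVneq x 0; [rewrite additive0 | apply: fixQ].
rewrite additive_sum; apply: eq_big_seq => x /sQ [/fixQ0 //|/fixQ0].
by rewrite additiveN => /oppr_inj.
Qed.

End Additive.

Lemma quasi_kernel_op (F : Type) (V : zmodType) (act : F -> V -> V) u :
  quasi_kernel act u -> exists op, forall a b, act a u + act b u = act (op a b) u.
Proof.
move=> Qu.
exists (fun a b => epsilon (inhabits a) (fun c => act a u + act b u = act c u)).
by move=> a b; apply: (epsilon_spec _ _ (Qu a b)).
Qed.

Lemma finite_block_typeP (F : Type) (V : zmodType) (act : F -> V -> V) :
  finite_block_type act ->
  exists C : list (F -> F -> F), forall op, block_type act op <-> List.In op C.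
Proof.
move=> [s sBT].
pose isBT c := if excluded_middle_informative (block_type act c) then true else false.
exists (List.filter isBT s) => op; rewrite List.filter_In /isBT.
case: excluded_middle_informative => opBT; last by split=> [|[]].
split=> // _; split=> //; have [c [sc opc]] := sBT op opBT.
suff -> : op = c by [].
by apply: functional_extensionality => a; apply: functional_extensionality.
Qed.

Section FGroup.

Variables (F : Type) (mul : F -> F -> F) (z o m : F).
Variables (V : zmodType) (act : F -> V -> V).
Hypothesis G : is_Fgroup mul z o m act.

Lemma act_additive a x y : act a (x + y) = act a x + act a y.
Proof. by case: G. Qed.

Lemma act_faithful a b : (forall x, act a x = act b x) -> a = b.
Proof. by case: G => _ [faithful _]; apply: faithful. Qed.

Lemma act_zero x : act z x = 0.
Proof. by case: G => _ [_ [zero _]]. Qed.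

Lemma act_one x : act o x = x.
Proof. by case: G => _ [_ [_ [one _]]]. Qed.

Lemma act_opp x : act m x = - x.
Proof. by case: G => _ [_ [_ [_ [opp _]]]]. Qed.

Lemma act_mul a b x : act (mul a b) x = act a (act b x).
Proof. by case: G => _ [_ [_ [_ [_ [act_mul _]]]]]. Qed.

Lemma act_inj u a b : u <> 0 -> act a u = act b u -> a = b.
Proof. by case: G => _ [_ [_ [_ [_ [_ [_ [_ [_ fpf]]]]]]]] nu /fpf []. Qed.

Lemma Fgroup_mul_laws : Fcomm act -> mul_laws mul z o.
Proof.
case: G => _ [_ [_ [_ [_ [_ [zo [mul_nz [inv _]]]]]]]] Fc; split=> //.
- by move=> a b; apply: act_faithful => x; rewrite !act_mul Fc.
- by move=> a; apply: act_faithful => x; rewrite act_mul act_one.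
- by move=> a; apply: act_faithful => x; rewrite act_mul !act_zero.
- by move=> a /inv [b [_ [ab _]]]; exists b.
Qed.

Lemma block_type_field_add op : block_type act op -> field_add mul z m op.
Proof.
move=> [u [_ nu opu]]; split=> [a b|a b c|a|a|c a b]; apply: (act_inj nu); rewrite -!opu.
- exact: addrC.
- by rewrite addrA.
- by rewrite act_zero add0r.
- by rewrite act_mul act_opp subrr act_zero.
- by rewrite !act_mul -opu act_additive.
Qed.

Lemma fsum_act_additive s x y :
  fsum_act act s (x + y) = fsum_act act s x + fsum_act act s y.
Proof. by rewrite /fsum_act -big_split; apply: eq_bigr => a _; apply: act_additive. Qed.

Lemma fsum_act_comm s a v : Fcomm act ->
  fsum_act act s (act a v) = act a (fsum_act act s v).
Proof.
by move=> Fc; rewrite /fsum_act (additive_sum (act_additive a)); apply: eq_bigr.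
Qed.

Lemma fsum_act_block op u s : (forall a b, act a u + act b u = act (op a b) u) ->
  fsum_act act s u = act (fsum_val z op s) u.
Proof.
move=> opu; elim: s => [|a s IH]; first by rewrite /fsum_act big_nil act_zero.
by rewrite /fsum_act big_cons -/(fsum_act act s u) IH opu.
Qed.

Lemma Fbar_aut_fsum_val_neq0 s op :
  Fbar_aut act s -> block_type act op -> fsum_val z op s <> z.
Proof.
move=> [_ [g sK _]] [u [_ nu opu]] s0; apply: nu.
rewrite -[u]sK (fsum_act_block s opu) s0 act_zero.
by rewrite -{1}(additive0 (fsum_act_additive s)) sK.
Qed.

End FGroup.

Section NearVectorSpace.

Variables (F : Type) (mul : F -> F -> F) (z o m : F).
Variables (V : zmodType) (act : F -> V -> V).
Hypotheses (N : near_vector_space mul z o m act) (Fc : Fcomm act).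

Let G : is_Fgroup mul z o m act := N.1.

Lemma fsum_act_cancel s t :
  (forall op, block_type act op -> mul (fsum_val z op s) (fsum_val z op t) = o) ->
  cancel (fsum_act act s) (fsum_act act t).
Proof.
move=> st; pose ts := fsum_act act t \o fsum_act act s.
apply: (@additive_id_of_generators _ ts _ _ N.2) => [x y|x Qx nx]; rewrite /ts /=.
  by rewrite !(fsum_act_additive G).
have [op opx] := quasi_kernel_op Qx.
rewrite (fsum_act_block G s opx) (fsum_act_comm G t _ _ Fc) (fsum_act_block G t opx).
by rewrite -(act_mul G) st ?(act_one G) //; exists x.
Qed.

Lemma Fbar_autE s : finite_block_type act ->
  Fbar_aut act s <-> forall op, block_type act op -> fsum_val z op s <> z.
Proof.
move=> finBT; split=> [aut op|s_nz]; first exact: (Fbar_aut_fsum_val_neq0 G aut).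
have M := Fgroup_mul_laws G Fc.
have [C BTC] := finite_block_typeP finBT.
have [t tC] := fsum_interpolate (m := m) M (fun c => mul_inv mul z o (fsum_val z c s))
  (fun c Cc => block_type_field_add G (proj2 (BTC c) Cc)).
have st op : block_type act op -> mul (fsum_val z op s) (fsum_val z op t) = o.
  by move=> opBT; rewrite tC; [apply: (mul_invP M); apply: s_nz | apply/BTC].
split; first exact: (fsum_act_additive G).
exists (fsum_act act t); apply: fsum_act_cancel => // op opBT.
by rewrite (mul_comm M); apply: st.
Qed.

End NearVectorSpace.

Lemma block_type_sub_of_Fbar_aut_sub (F : Type) (mul : F -> F -> F) (z o m : F)
    (V1 V2 : zmodType) (act1 : F -> V1 -> V1) (act2 : F -> V2 -> V2) :
  is_Fgroup mul z o m act1 -> near_vector_space mul z o m act2 -> Fcomm act2 ->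
  finite_block_type act2 -> (forall s, Fbar_aut act2 s -> Fbar_aut act1 s) ->
  forall op, block_type act1 op -> block_type act2 op.
Proof.
move=> G1 N2 Fc2 finBT2 aut21 op opBT1; apply: NNPP => opBT2.
have M := Fgroup_mul_laws N2.1 Fc2.
have [C BTC] := finite_block_typeP finBT2.
pose g c := if excluded_middle_informative (c = op) then z else o.
have [s sC] : exists s, forall c, List.In c (op :: C) -> fsum_val z c s = g c.
  apply: (fsum_interpolate (m := m) M) => c [<-|/BTC].
    exact: (block_type_field_add G1 opBT1).
  exact: (block_type_field_add N2.1).
have s_op : fsum_val z op s = z.
  by rewrite sC /=; [rewrite /g; case: excluded_middle_informative | left].
have : Fbar_aut act2 s.
  apply/(Fbar_autE N2 Fc2 _ finBT2) => c cBT.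
  rewrite sC /=; last by right; apply/BTC.
  rewrite /g; case: excluded_middle_informative => [cop|ncop]; last exact: one_neq_zero M.
  by case: opBT2; rewrite -cop.
by move=> /aut21 /(Fbar_aut_fsum_val_neq0 G1) /(_ opBT1) /(_ s_op).
Qed.

Theorem mainTheorem10 (F : Type) (mul : F -> F -> F) (z o m : F)
    (V1 V2 : zmodType) (act1 : F -> V1 -> V1) (act2 : F -> V2 -> V2) :
  near_vector_space mul z o m act1 -> near_vector_space mul z o m act2 ->
  Fcomm act1 -> Fcomm act2 ->
  finite_block_type act1 -> finite_block_type act2 ->
  ((forall op, block_type act1 op <-> block_type act2 op) <->
   (forall s : seq F, Fbar_aut act1 s <-> Fbar_aut act2 s)).
Proof.
move=> N1 N2 Fc1 Fc2 finBT1 finBT2; split=> [BT s|aut op].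
  rewrite (Fbar_autE N1 Fc1 s finBT1) (Fbar_autE N2 Fc2 s finBT2).
  by split=> s_nz op /BT; apply: s_nz.
split; [apply: (block_type_sub_of_Fbar_aut_sub N1.1 N2) |
        apply: (block_type_sub_of_Fbar_aut_sub N2.1 N1)] => // s /aut //.
Qed.
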